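(* A real Lie algebra $\mathfrak n$ is $\mathfrak k$-nilpotent with $\mathfrak k$ abelian if and only if it admits a basis $\{z_1,\dots,z_r,e_1,\dots,e_{2m}\}$ such that the only non-zero Lie brackets are $$[e_{2j-1},e_{2j}]=\sum_{i=1}^r\lambda^i_j z_i,\qquad j=1,\dots,m,$$ for some coefficients $\lambda^i_j\in\mathbb R$ with $(\lambda^1_j,\dots,\lambda^r_j)\neq0$ for every $1\le j\le m$.
   Context: Let $\mathfrak k$ be a compact Lie algebra with a bi-invariant Euclidean scalar product $\langle\cdot,\cdot\rangle_{\mathfrak k}$ and $\varphi:\mathfrak k\to\mathfrak u(V,I,\langle\cdot,\cdot\rangle_V)$ a finite-dimensional unitary representation on a Hermitian vector space $(V,I,\langle\cdot,\cdot\rangle_V)$ without trivial submodules. The associated $\mathfrak k$-nilpotent Lie algebra is the vector space $\mathfrak n=\mathfrak k+V$ with the bracket whose only non-zero components are $[v_1,v_2]\in\mathfrak k$ for $v_1,v_2\in V$, determined by $\langle[v_1,v_2],K\rangle_{\mathfrak k}=\langle\varphi(K)v_1,v_2\rangle_V$ for all $K\in\mathfrak k$. A Lie algebra is $\mathfrak k$-nilpotent if it is (isomorphic to) one arising in this way from some such data. *)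

From HB Require Import structures.
From mathcomp Require Import all_boot all_order all_algebra.
From mathcomp Require Import reals.
Set Implicit Arguments.
Unset Strict Implicit.
Unset Printing Implicit Defensive.
Import Order.TTheory GRing.Theory Num.Theory.
Local Open Scope ring_scope.

Definition lie_bracket (R : nzRingType) (L : lmodType R) (br : L -> L -> L) : Prop :=
  [/\ (forall (a : R) (x y z : L), br (a *: x + y) z = a *: br x z + br y z),
      (forall (a : R) (x y z : L), br x (a *: y + z) = a *: br x y + br x z),
      (forall x : L, br x x = 0) &
      (forall x y z : L, br x (br y z) + br y (br z x) + br z (br x y) = 0)].

Definition euclidean_product (R : realType) (U : lmodType R) (g : U -> U -> R) : Prop :=
  [/\ (forall (a : R) (u v w : U), g (a *: u + v) w = a * g u w + g v w),
      (forall u v : U, g u v = g v u) &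
      (forall u : U, u != 0 -> 0 < g u u)].

(* The data defining a k-nilpotent Lie algebra, with k = R^p (as a vector
   space) carrying the Lie bracket brk and the bi-invariant scalar product gk,
   V = R^q (as a real vector space) carrying the complex structure I and the
   real scalar product gV making (V, I, gV) a Hermitian vector space, and the
   unitary representation phi (phi K acts on row vectors by v |-> v *m phi K),
   without trivial submodules.  beta is the bracket V x V -> k defined by
   gk (beta v1 v2) K = gV (phi(K) v1) v2. *)
Definition knil_data (R : realType) (p q : nat)
    (brk : 'rV[R]_p -> 'rV[R]_p -> 'rV[R]_p) (gk : 'rV[R]_p -> 'rV[R]_p -> R)
    (I : 'M[R]_q) (gV : 'rV[R]_q -> 'rV[R]_q -> R) (phi : 'rV[R]_p -> 'M[R]_q)
    (beta : 'rV[R]_q -> 'rV[R]_q -> 'rV[R]_p) : Prop :=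
  [/\
      [/\ lie_bracket brk, euclidean_product gk &
          (forall K L M, gk (brk K L) M + gk L (brk K M) = 0)],
      [/\ I *m I = - 1%:M, euclidean_product gV &
          (forall v w, gV (v *m I) (w *m I) = gV v w)],
      [/\ (forall (a : R) K L, phi (a *: K + L) = a *: phi K + phi L),
          (forall K L (v : 'rV[R]_q), v *m phi (brk K L)
                         = (v *m phi L) *m phi K - (v *m phi K) *m phi L),
          (forall K, phi K *m I = I *m phi K) &
          (forall K v w, gV (v *m phi K) w + gV v (w *m phi K) = 0)],
      (forall W : {vspace 'rV[R]_q},
          (forall w, w \in W -> w *m I \in W) ->
          (forall K w, w \in W -> w *m phi K = 0) -> W = 0%VS) &
      (forall v1 v2 K, gk (beta v1 v2) K = gV (v1 *m phi K) v2)].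

(* The Lie algebra (L, br) is k-nilpotent with k abelian: it is isomorphic
   to n = k + V with bracket [K1 + v1, K2 + v2] = beta v1 v2, for some data
   as above with k abelian. *)
Definition knilpotent_abelian (R : realType) (L : vectType R) (br : L -> L -> L) : Prop :=
  exists (p q : nat) (brk : 'rV[R]_p -> 'rV[R]_p -> 'rV[R]_p)
         (gk : 'rV[R]_p -> 'rV[R]_p -> R) (I : 'M[R]_q)
         (gV : 'rV[R]_q -> 'rV[R]_q -> R) (phi : 'rV[R]_p -> 'M[R]_q)
         (beta : 'rV[R]_q -> 'rV[R]_q -> 'rV[R]_p)
         (fk : {linear 'rV[R]_p -> L}) (fV : {linear 'rV[R]_q -> L}),
    [/\ knil_data brk gk I gV phi beta,
        (forall K1 K2, brk K1 K2 = 0),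
        bijective (fun kv : 'rV[R]_p * 'rV[R]_q => fk kv.1 + fV kv.2) &
        (forall K1 v1 K2 v2,
            br (fk K1 + fV v1) (fk K2 + fV v2) = fk (beta v1 v2))].

(* Forward: as k is abelian, the operators phi(K) I are commuting and
   self-adjoint, so (complexifying to get an eigenvalue) they have a common
   real eigenvector u in any nonzero invariant subspace; then u phi(K) is a
   multiple of u I for every K.  Repeating this in the orthogonal complement of
   span(u, u I) splits V into orthogonal I-stable planes span(x_j, x_j I) with
   beta(x_j, x_j' I) = 0 for j <> j', beta(x_j, x_j') = beta(x_j I, x_j' I) = 0.
   The weight beta(x_j, x_j I) is nonzero since V has no trivial submodule, and
   z_i = e_i, x_j, x_j I is the required basis.
   Backward: take k = R^r with the standard product and V = R^(2m) on which K
   acts on the j-th plane by (sum_i K_i lam^i_j) I; the condition lam_j <> 0 is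
   the absence of trivial submodules. *)

From HB Require Import structures.
From mathcomp Require Import all_boot all_order all_algebra.
From mathcomp Require Import reals.
From mathcomp Require Import ring lra.
From mathcomp Require complex.
From Stdlib Require Import Classical.
Import Order.TTheory GRing.Theory Num.Theory.
Local Open Scope ring_scope.
Set Implicit Arguments.
Unset Strict Implicit.
Unset Printing Implicit Defensive.

Section EuclideanProduct.
Variables (R : realType) (U : lmodType R) (g : U -> U -> R).
Hypothesis hg : euclidean_product g.

Lemma epDl u v w : g (u + v) w = g u w + g v w.
Proof. by have [h _ _] := hg; have := h 1 u v w; rewrite scale1r mul1r. Qed.

Lemma ep0l w : g 0 w = 0.
Proof. by apply: (@addrI _ (g 0 w)); rewrite -epDl !addr0. Qed.

Lemma epZl a u w : g (a *: u) w = a * g u w.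
Proof. by have [h _ _] := hg; have := h a u 0 w; rewrite addr0 ep0l addr0. Qed.

Lemma epC u v : g u v = g v u.
Proof. by have [_ h _] := hg. Qed.

Lemma epDr u v w : g w (u + v) = g w u + g w v.
Proof. by rewrite epC epDl !(epC w). Qed.

Lemma epZr a u w : g w (a *: u) = a * g w u.
Proof. by rewrite epC epZl epC. Qed.

Lemma epNl u w : g (- u) w = - g u w.
Proof. by rewrite -scaleN1r epZl mulN1r. Qed.

Lemma epBl u v w : g (u - v) w = g u w - g v w.
Proof. by rewrite epDl epNl. Qed.

Lemma ep_suml I (r : seq I) P (F : I -> U) w :
  g (\sum_(i <- r | P i) F i) w = \sum_(i <- r | P i) g (F i) w.
Proof. by elim/big_rec2: _ => [|i x y _ <-]; rewrite ?ep0l ?epDl. Qed.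

Lemma ep_gt0 u : u != 0 -> 0 < g u u.
Proof. by have [_ _ h] := hg; apply: h. Qed.

Lemma ep_ge0 u : 0 <= g u u.
Proof. by have [->|/ep_gt0/ltW//] := eqVneq u 0; rewrite ep0l. Qed.

Lemma ep_anisotropic u : g u u = 0 -> u = 0.
Proof. by apply: contra_eq => /ep_gt0/gt_eqF->. Qed.

Lemma ep_nondegenerate u : (forall w, g u w = 0) -> u = 0.
Proof. by move=> h; apply: ep_anisotropic. Qed.

Lemma ep_addsq_gt0 a b : (a != 0) || (b != 0) -> 0 < g a a + g b b.
Proof. by case/orP=> /ep_gt0; [apply: ltr_wpDr | apply: ltr_wpDl]; apply: ep_ge0. Qed.

Lemma ep_skew_self (f : U -> U) v :
  (forall v w, g (f v) w = - g v (f w)) -> g (f v) v = 0.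
Proof. by move=> skew; have := skew v v; rewrite epC => e; lra. Qed.

Lemma ep_normalize u :
  u != 0 -> g ((Num.sqrt (g u u))^-1 *: u) ((Num.sqrt (g u u))^-1 *: u) = 1.
Proof.
move=> u0; have uu_gt0 := ep_gt0 u0.
rewrite epZl epZr mulrA -expr2 exprVn sqr_sqrtr ?mulVf ?gt_eqF //.
exact: ltW.
Qed.

End EuclideanProduct.

Lemma linear_row_sum (R : nzRingType) (V : lmodType R) n (f : 'rV[R]_n -> V) :
  (forall a K L, f (a *: K + L) = a *: f K + f L) ->
  forall K, f K = \sum_i K 0 i *: f 'e_i.
Proof.
move=> fP K; have f0 : f 0 = 0.
  by apply: (@addrI _ (f 0)); have := fP 1 0 0; rewrite !scale1r !addr0.
rewrite {1}(row_sum_delta K).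
by elim/big_rec2: _ => [|i y1 y2 _ <-]; [exact: f0 | exact: fP].
Qed.

Lemma sum_mul_delta (R : nzRingType) n (c : 'I_n -> R) l :
  \sum_j c j * (j == l)%:R = c l.
Proof.
by rewrite (bigD1 l) //= eqxx mulr1 big1 ?addr0 // => j /negPf ->; rewrite mulr0.
Qed.

Lemma stablemx_rowP (F : fieldType) n (W A : 'M[F]_n) :
  (forall u : 'rV_n, (u <= W)%MS -> (u *m A <= W)%MS) -> stablemx W A.
Proof. by move=> WA; apply/row_subP => i; rewrite row_mul WA // row_sub. Qed.

Section Complexification.
Import complex.
Variable R : realType.
Local Notation C := R[i].
Local Notation toC := (real_complex R).
Local Notation Re := (@complex.Re R).
Local Notation Im := (@complex.Im R).

Lemma Re_sum I (r : seq I) P (F : I -> C) :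
  Re (\sum_(i <- r | P i) F i) = \sum_(i <- r | P i) Re (F i).
Proof. by elim/big_rec2: _ => [|i x y _ <-] //; case: (F i); case: y. Qed.

Lemma Im_sum I (r : seq I) P (F : I -> C) :
  Im (\sum_(i <- r | P i) F i) = \sum_(i <- r | P i) Im (F i).
Proof. by elim/big_rec2: _ => [|i x y _ <-] //; case: (F i); case: y. Qed.

Lemma map_Re_mulmx m n (v : 'rV[C]_m) (S : 'M[R]_(m, n)) :
  map_mx Re (v *m map_mx toC S) = map_mx Re v *m S.
Proof.
apply/rowP => j; rewrite !mxE Re_sum; apply: eq_bigr => k _.
by rewrite !mxE; case: (v 0 k) => a b /=; rewrite mulr0 subr0.
Qed.

Lemma map_Im_mulmx m n (v : 'rV[C]_m) (S : 'M[R]_(m, n)) :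
  map_mx Im (v *m map_mx toC S) = map_mx Im v *m S.
Proof.
apply/rowP => j; rewrite !mxE Im_sum; apply: eq_bigr => k _.
by rewrite !mxE; case: (v 0 k) => a b /=; rewrite mulr0 add0r.
Qed.

Lemma map_Re_Im_eq0 n (v : 'rV[C]_n) : map_mx Re v = 0 -> map_mx Im v = 0 -> v = 0.
Proof.
move=> /rowP Re0 /rowP Im0; apply/rowP => j; have := Re0 j; have := Im0 j.
by rewrite !mxE; case: (v 0 j) => a b /= -> ->.
Qed.

Lemma map_Re_Im_eigen n (S : 'M[R]_n) (v : 'rV[C]_n) mu :
  v *m map_mx toC S = mu *: v ->
  map_mx Re v *m S = Re mu *: map_mx Re v - Im mu *: map_mx Im v /\
  map_mx Im v *m S = Im mu *: map_mx Re v + Re mu *: map_mx Im v.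
Proof.
move=> eig; rewrite -map_Re_mulmx -map_Im_mulmx eig.
split; apply/rowP => j; rewrite !mxE; case: (mu) => a b; by case: (v 0 j) => c d /=; ring.
Qed.

End Complexification.

Lemma common_eigenvector_sub {C : numClosedFieldType} n (W : 'M[C]_n)
    (As : seq 'M[C]_n) :
  W != 0 -> all (fun A => stablemx W A) As -> {in As &, forall A B, comm_mx A B} ->
  exists v : 'rV_n, [/\ (v <= W)%MS, v != 0 & all (fun A => stablemx v A) As].
Proof.
move=> W0 /allP sWAs cAs.
have [] := @common_eigenvector C _ [seq restrictmx W A | A <- As].
- by rewrite lt0n mxrank_eq0.
- move=> _ _ /mapP[A A_in ->] /mapP[B B_in ->].
  by rewrite /comm_mx -!conjmxM ?inE ?stablemx_row_base ?sWAs // (cAs A B).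
move=> v v0 /allP vAs; exists (v *m row_base W); split.
- by rewrite mulmx_sub // eq_row_base.
- by rewrite mulmx_free_eq0 ?row_base_free.
apply/allP => A A_in; rewrite -stablemx_restrict ?sWAs //.
by apply: vAs; apply/mapP; exists A.
Qed.

Section RealEigenvector.
Import complex.
Variables (R : realType) (n : nat) (g : 'rV[R]_n -> 'rV[R]_n -> R).
Hypothesis hg : euclidean_product g.
Local Notation toC := (real_complex R).
Local Notation Re := (@complex.Re R).
Local Notation Im := (@complex.Im R).

Definition selfadjoint (S : 'M[R]_n) := forall v w, g (v *m S) w = g v (w *m S).

Lemma selfadjoint_rotation_eq0 S (a b : 'rV_n) s t :
  selfadjoint S -> (a != 0) || (b != 0) ->
  a *m S = s *: a - t *: b -> b *m S = t *: a + s *: b -> t = 0.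
Proof.
move=> sS ab aS bS; have := sS a b; rewrite aS bS epBl ?epDr ?epZl ?epZr // => e.
have : t * (g a a + g b b) = 0 by lra.
by move/eqP; rewrite mulf_eq0 (gt_eqF (ep_addsq_gt0 hg ab)) orbF => /eqP.
Qed.

Lemma common_real_eigenvector (W : 'M[R]_n) (Ss : seq 'M[R]_n) :
  W != 0 -> all (fun S => stablemx W S) Ss -> {in Ss &, forall S T, comm_mx S T} ->
  {in Ss, forall S, selfadjoint S} ->
  exists u : 'rV_n, [/\ (u <= W)%MS, u != 0 &
                        {in Ss, forall S, exists c, u *m S = c *: u}].
Proof.
move=> W0 sWSs cSs sSs.
have [|||v [vW v0 vSs]] := @common_eigenvector_sub _ _ (map_mx toC W) (map (map_mx toC) Ss).
- by rewrite map_mx_eq0.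
- by rewrite all_map; apply: sub_all sWSs => S; rewrite /= -map_mxM map_submx.
- by move=> _ _ /mapP[S S_in ->] /mapP[T T_in ->]; rewrite /comm_mx -!map_mxM (cSs S T).
pose a := map_mx Re v; pose b := map_mx Im v.
have [w vE] := submxP vW.
have aW : (a <= W)%MS by rewrite /a vE map_Re_mulmx submxMl.
have bW : (b <= W)%MS by rewrite /b vE map_Im_mulmx submxMl.
have ab : (a != 0) || (b != 0).
  apply: contraTT v0; rewrite negb_or !negbK => /andP[/eqP a0 /eqP b0].
  by rewrite (map_Re_Im_eq0 a0 b0).
have eig S : S \in Ss -> exists c, a *m S = c *: a /\ b *m S = c *: b.
  move=> S_in; have /allP/(_ (map_mx toC S) (map_f _ S_in)) := vSs.
  case/sub_rVP => mu /map_Re_Im_eigen[aS bS].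
  have t0 := selfadjoint_rotation_eq0 (sSs S S_in) ab aS bS.
  by exists (Re mu); rewrite aS bS t0 !scale0r subr0 add0r.
case/orP: ab => [a0|b0]; [exists a | exists b]; split => // S /eig[c [aS bS]]; by exists c.
Qed.

End RealEigenvector.

Section ZXYComb.
Variables (R : nzRingType) (L : lmodType R) (r m : nat).
Variables (z : 'I_r -> L) (x y : 'I_m -> L).

Definition zxy_comb (a : 'I_r -> R) (b c : 'I_m -> R) :=
  \sum_i a i *: z i + \sum_j b j *: x j + \sum_j c j *: y j.

Lemma eq_zxy_comb a b c a' b' c' : a =1 a' -> b =1 b' -> c =1 c' ->
  zxy_comb a b c = zxy_comb a' b' c'.
Proof.
by move=> ea eb ec; congr (_ + _ + _); apply: eq_bigr => i _; rewrite ?ea ?eb ?ec.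
Qed.

Lemma zxy_combB a b c a' b' c' : zxy_comb a b c - zxy_comb a' b' c' =
  zxy_comb (fun i => a i - a' i) (fun j => b j - b' j) (fun j => c j - c' j).
Proof.
rewrite /zxy_comb !opprD addrACA [X in X + _]addrACA.
by congr (_ + _ + _); rewrite -sumrB; apply: eq_bigr => i _; rewrite scalerBl.
Qed.

End ZXYComb.

Section ZXYBasis.
Variables (F : fieldType) (L : vectType F) (r m : nat).
Variables (z : 'I_r -> L) (x y : 'I_m -> L).

Definition zxy := [seq z i | i <- enum 'I_r] ++ [seq x j | j <- enum 'I_m]
                    ++ [seq y j | j <- enum 'I_m].

Local Notation zxy_comb := (zxy_comb z x y).

Definition zxy_tuple : (r + (m + m)).-tuple L :=
  [tuple of [tuple z i | i < r] ++ [tuple of [tuple x j | j < m] ++ [tuple y j | j < m]]].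

Lemma zxy_tupleE : val zxy_tuple = zxy.
Proof. by rewrite /= /zxy enumT unlock. Qed.

Lemma zxy_tuple_comb (k : 'I_(r + (m + m)) -> F) :
  \sum_i k i *: zxy_tuple`_i = zxy_comb (fun i => k (lshift _ i))
     (fun j => k (rshift r (lshift m j))) (fun j => k (rshift r (rshift m j))).
Proof.
have nth_map_enum T n (f : 'I_n -> T) t0 (j : 'I_n) :
    nth t0 [seq f i | i <- enum 'I_n] j = f j.
  by rewrite (nth_map j) ?size_enum_ord // nth_ord_enum.
rewrite !big_split_ord /zxy_comb /= addrA.
congr (_ + _ + _); apply: eq_bigr => i _; congr (_ *: _).
- by rewrite nth_cat size_map size_enum_ord ltn_ord nth_map_enum.
- rewrite nth_cat size_map size_enum_ord ltnNge leq_addr addKn.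
  by rewrite nth_cat size_map size_enum_ord ltn_ord nth_map_enum.
- rewrite nth_cat size_map size_enum_ord ltnNge leq_addr addKn.
  by rewrite nth_cat size_map size_enum_ord ltnNge leq_addr addKn nth_map_enum.
Qed.

Lemma zxy_comb_coord l : l \in <<zxy>>%VS ->
  l = zxy_comb (fun i => coord zxy_tuple (lshift _ i) l)
               (fun j => coord zxy_tuple (rshift r (lshift m j)) l)
               (fun j => coord zxy_tuple (rshift r (rshift m j)) l).
Proof. by rewrite -zxy_tupleE => /coord_span {1}->; rewrite zxy_tuple_comb. Qed.

Lemma span_zxyP l : l \in <<zxy>>%VS <-> exists a b c, l = zxy_comb a b c.
Proof.
split; first by move/zxy_comb_coord ->; do 3 eexists.
case=> a [b [c ->]]; rewrite !memvD // memv_suml // => i _; rewrite memvZ // memv_span //.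
all: by rewrite /zxy !mem_cat map_f ?mem_enum ?orbT.
Qed.

Lemma free_zxyP : free zxy <-> (forall a b c, zxy_comb a b c = 0 ->
   [/\ forall i, a i = 0, forall j, b j = 0 & forall j, c j = 0]).
Proof.
rewrite -zxy_tupleE; split => [/freeP fr a b c abc0 | fr].
  pose k i := match split i with
     | inl i1 => a i1
     | inr i2 => match split i2 with inl j => b j | inr j => c j end
     end.
  have kz i : k (lshift _ i) = a i by rewrite /k (unsplitK (inl _ i)).
  have kx j : k (rshift r (lshift m j)) = b j.
    by rewrite /k (unsplitK (inr _ (lshift m j))) (unsplitK (inl _ j)).
  have ky j : k (rshift r (rshift m j)) = c j.
    by rewrite /k (unsplitK (inr _ (rshift m j))) (unsplitK (inr _ j)).
  have k0 : forall i, k i = 0.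
    by apply: fr; rewrite zxy_tuple_comb -abc0; apply: eq_zxy_comb.
  by split=> i; [rewrite -kz | rewrite -kx | rewrite -ky]; apply: k0.
apply/freeP => k; rewrite zxy_tuple_comb => /fr[k0z k0x k0y] i.
case: (splitP i) => [j ij|j ij]; first by have -> : i = lshift _ j by apply: val_inj.
case: (splitP j) => [j' jj'|j' jj'].
  by have -> : i = rshift r (lshift m j') by apply: val_inj; rewrite /= ij jj'.
by have -> : i = rshift r (rshift m j') by apply: val_inj; rewrite /= ij jj'.
Qed.

Lemma basis_zxyP : basis_of fullv zxy <->
  (forall l, exists a b c, l = zxy_comb a b c) /\
  (forall a b c, zxy_comb a b c = 0 ->
     [/\ forall i, a i = 0, forall j, b j = 0 & forall j, c j = 0]).
Proof.
rewrite /basis_of -free_zxyP; split => [/andP[/eqP span_full ->] | [span_all ->]].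
  by split => // l; apply/span_zxyP; rewrite span_full memvf.
by rewrite andbT eqEsubv subvf; apply/subvP => l _; apply/span_zxyP.
Qed.

End ZXYBasis.

Section LieBracket.
Variables (R : nzRingType) (L : lmodType R) (br : L -> L -> L).
Hypothesis hbr : lie_bracket br.

Lemma lie_brDl u v w : br (u + v) w = br u w + br v w.
Proof. by case: hbr => h _ _ _; rewrite -{1}[u]scale1r h scale1r. Qed.

Lemma lie_br0l w : br 0 w = 0.
Proof. by apply: (@addrI _ (br 0 w)); rewrite -lie_brDl !addr0. Qed.

Lemma lie_brZl a u w : br (a *: u) w = a *: br u w.
Proof. by case: hbr => h _ _ _; have := h a u 0 w; rewrite addr0 lie_br0l addr0. Qed.

Lemma lie_brDr u v w : br w (u + v) = br w u + br w v.
Proof. by case: hbr => _ h _ _; rewrite -{1}[u]scale1r h scale1r. Qed.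

Lemma lie_br0r w : br w 0 = 0.
Proof. by apply: (@addrI _ (br w 0)); rewrite -lie_brDr !addr0. Qed.

Lemma lie_brZr a u w : br w (a *: u) = a *: br w u.
Proof. by case: hbr => _ h _ _; have := h a w u 0; rewrite addr0 lie_br0r addr0. Qed.

Lemma lie_br_suml I (s : seq I) P (F : I -> L) w :
  br (\sum_(i <- s | P i) F i) w = \sum_(i <- s | P i) br (F i) w.
Proof. by elim/big_rec2: _ => [|i a b _ <-]; rewrite ?lie_br0l ?lie_brDl. Qed.

Lemma lie_br_sumr I (s : seq I) P (F : I -> L) w :
  br w (\sum_(i <- s | P i) F i) = \sum_(i <- s | P i) br w (F i).
Proof. by elim/big_rec2: _ => [|i a b _ <-]; rewrite ?lie_br0r ?lie_brDr. Qed.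

Section ZXYBracket.
Variables (r m : nat) (z : 'I_r -> L) (x y : 'I_m -> L) (lam : 'I_r -> 'I_m -> R).
Hypothesis hzz : forall i i', br (z i) (z i') = 0.
Hypothesis hzx : forall i j, [/\ br (z i) (x j) = 0, br (x j) (z i) = 0,
                                 br (z i) (y j) = 0 & br (y j) (z i) = 0].
Hypothesis hxx : forall j j', br (x j) (x j') = 0 /\ br (y j) (y j') = 0.
Hypothesis hxy : forall j j', br (x j) (y j')
                             = if j == j' then \sum_(i < r) lam i j *: z i else 0.
Hypothesis hyx : forall j j', br (y j') (x j)
                             = if j == j' then - \sum_(i < r) lam i j *: z i else 0.

Let Z j := \sum_(i < r) lam i j *: z i.

Lemma sum_scale_delta (c : 'I_m -> R) (F : 'I_m -> L) l :
  \sum_j c j *: (if l == j then F l else 0) = c l *: F l.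
Proof.
rewrite (bigD1 l) //= eqxx big1 ?addr0 // => j /negPf.
by rewrite eq_sym => ->; rewrite scaler0.
Qed.

Lemma lie_br_zxy_comb a b c a' b' c' :
  br (zxy_comb z x y a b c) (zxy_comb z x y a' b' c') =
  \sum_j (b j * c' j - c j * b' j) *: Z j.
Proof.
set w := zxy_comb z x y a' b' c'.
have br_z i : br (z i) w = 0.
  rewrite /w /zxy_comb !lie_brDr !lie_br_sumr !big1 ?addr0 // => j _;
    rewrite lie_brZr; first [rewrite hzz | case: (hzx i j) => -> _ _ _
                                         | case: (hzx i j) => _ _ -> _]; exact: scaler0.
have br_x j : br (x j) w = c' j *: Z j.
  rewrite /w /zxy_comb !lie_brDr !lie_br_sumr.
  rewrite big1 ?add0r => [|i _]; last first.
    by rewrite lie_brZr; case: (hzx i j) => _ -> _ _; rewrite scaler0.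
  rewrite big1 ?add0r => [|i _]; last by rewrite lie_brZr (hxx j i).1 scaler0.
  by under eq_bigr do rewrite lie_brZr hxy; exact: (sum_scale_delta c' Z j).
have br_y j : br (y j) w = - (b' j *: Z j).
  rewrite /w /zxy_comb !lie_brDr !lie_br_sumr big1 ?add0r => [|i _]; last first.
    by rewrite lie_brZr; case: (hzx i j) => _ _ _ ->; rewrite scaler0.
  rewrite [X in _ + X]big1 ?addr0 => [|i _]; last by rewrite lie_brZr (hxx j i).2 scaler0.
  under eq_bigr do rewrite lie_brZr hyx.
  rewrite -scalerN -(sum_scale_delta b' (fun l => - Z l) j); apply: eq_bigr => l _.
  by rewrite eq_sym; case: eqP => [->|].
rewrite {1}/zxy_comb !lie_brDl !lie_br_suml big1 ?add0r => [|i _]; last first.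
  by rewrite lie_brZl br_z scaler0.
rewrite -big_split; apply: eq_bigr => j _ /=.
by rewrite !lie_brZl br_x br_y scalerN !scalerA scalerBl.
Qed.

End ZXYBracket.
End LieBracket.

Definition knil_abelian_basis (R : realType) (L : vectType R) (br : L -> L -> L)
    r m (z : 'I_r -> L) (x y : 'I_m -> L) (lam : 'I_r -> 'I_m -> R) :=
  [/\ basis_of fullv (zxy z x y),
      [/\ (forall i i', br (z i) (z i') = 0),
          (forall i j, [/\ br (z i) (x j) = 0, br (x j) (z i) = 0,
                           br (z i) (y j) = 0 & br (y j) (z i) = 0]) &
          (forall j j', br (x j) (x j') = 0 /\ br (y j) (y j') = 0)],
      (forall j j', br (x j) (y j')
                    = if j == j' then \sum_(i < r) lam i j *: z i else 0),
      (forall j j', br (y j') (x j)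
                    = if j == j' then - \sum_(i < r) lam i j *: z i else 0) &
      (forall j, exists i, lam i j != 0)].

Section Forward.
Variables (R : realType) (p q : nat) (brk : 'rV[R]_p -> 'rV[R]_p -> 'rV[R]_p).
Variables (gk : 'rV[R]_p -> 'rV[R]_p -> R) (I : 'M[R]_q).
Variables (gV : 'rV[R]_q -> 'rV[R]_q -> R) (phi : 'rV[R]_p -> 'M[R]_q).
Variables (beta : 'rV[R]_q -> 'rV[R]_q -> 'rV[R]_p).
Hypothesis hd : knil_data brk gk I gV phi beta.
Hypothesis k_abelian : forall K1 K2, brk K1 K2 = 0.

Lemma knil_gk : euclidean_product gk. Proof. by case: hd => [[_ h _] _ _ _ _]. Qed.
Lemma knil_gV : euclidean_product gV. Proof. by case: hd => [_ [_ h _] _ _ _]. Qed.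
Lemma knil_II : I *m I = - 1%:M. Proof. by case: hd => [_ [h _ _] _ _ _]. Qed.

Lemma knil_gV_I v w : gV (v *m I) (w *m I) = gV v w.
Proof. by case: hd => [_ [_ _ h] _ _ _]. Qed.

Lemma knil_phiI K : phi K *m I = I *m phi K.
Proof. by case: hd => [_ _ [_ _ h _] _ _]. Qed.

Lemma knil_beta v1 v2 K : gk (beta v1 v2) K = gV (v1 *m phi K) v2.
Proof. by case: hd => [_ _ _ _ h]. Qed.

Lemma knil_phi_sum K : phi K = \sum_i K 0 i *: phi 'e_i.
Proof. by have [_ _ [phiP _ _ _] _ _] := hd; apply: linear_row_sum. Qed.

Lemma knil_phiC K L : phi K *m phi L = phi L *m phi K.
Proof.
have [_ _ [_ phi_br _ _] _ _] := hd.
apply/row_matrixP => i; rewrite !rowE !mulmxA.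
have := phi_br L K 'e_i; rewrite k_abelian knil_phi_sum.
rewrite big1 => [|j _]; last by rewrite mxE scale0r.
by rewrite mulmx0 => /eqP; rewrite eq_sym subr_eq0 => /eqP.
Qed.

Lemma knil_phi_skew K v w : gV (v *m phi K) w = - gV v (w *m phi K).
Proof. by case: hd => [_ _ [_ _ _ h] _ _]; apply/eqP; rewrite -addr_eq0 h. Qed.

Lemma knil_I_skew v w : gV (v *m I) w = - gV v (w *m I).
Proof.
rewrite -[in LHS](knil_gV_I (v *m I) w) -mulmxA knil_II mulmxN mulmx1.
exact: epNl knil_gV _ _.
Qed.

Lemma knil_beta_eq0 b : (forall K, gk b K = 0) -> b = 0.
Proof. exact: ep_nondegenerate knil_gk b. Qed.

Lemma knil_betaC v w : beta w v = - beta v w.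
Proof.
apply/eqP; rewrite -addr_eq0; apply/eqP/knil_beta_eq0 => K.
by rewrite (epDl knil_gk) !knil_beta knil_phi_skew (epC knil_gV w) addNr.
Qed.

Lemma knil_beta0l w : beta 0 w = 0.
Proof. by apply: knil_beta_eq0 => K; rewrite knil_beta mul0mx (ep0l knil_gV). Qed.

Lemma knil_beta0r w : beta w 0 = 0.
Proof. by rewrite knil_betaC knil_beta0l oppr0. Qed.

Lemma weight_vector_I (u : 'rV_q) a K :
  u *m phi K = a *: (u *m I) -> u *m I *m phi K = - a *: u.
Proof.
move=> uK; rewrite -mulmxA -knil_phiI mulmxA uK -scalemxAl -mulmxA knil_II.
by rewrite mulmxN mulmx1 scalerN scaleNr.
Qed.

Definition gram n (f : 'I_n -> 'rV[R]_q) : 'M[R]_(q, n) := \matrix_(k, j) gV 'e_k (f j).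

Lemma mulmx_gram n (f : 'I_n -> 'rV_q) u : u *m gram f = \row_j gV u (f j).
Proof.
apply/rowP => j; rewrite !mxE [in RHS](row_sum_delta u) (ep_suml knil_gV).
by apply: eq_bigr => k _; rewrite mxE (epZl knil_gV).
Qed.

Lemma knil_phiI_mul K L : (phi K *m I) *m (phi L *m I) = phi K *m phi L *m (I *m I).
Proof. by rewrite mulmxA -(mulmxA (phi K)) -knil_phiI !mulmxA. Qed.

Lemma knil_phiI_selfadjoint K : selfadjoint gV (phi K *m I).
Proof.
move=> v w; rewrite mulmxA knil_I_skew knil_phi_skew opprK.
by rewrite -!mulmxA knil_phiI.
Qed.

Lemma exists_weight_vector (W : 'M_q) :
  W != 0 -> (forall K, stablemx W (phi K *m I)) ->
  exists u, [/\ (u <= W)%MS, gV u u = 1 &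
                forall K, exists a, u *m phi K = a *: (u *m I)].
Proof.
move=> W0 W_stable.
pose Ss := [seq phi 'e_i *m I | i <- enum 'I_p].
have [||| u [uW u0 u_eigen]] := common_real_eigenvector knil_gV W0 (Ss := Ss).
- by apply/allP => _ /mapP[i _ ->].
- by move=> _ _ /mapP[i _ ->] /mapP[j _ ->]; rewrite /comm_mx !knil_phiI_mul knil_phiC.
- by move=> _ /mapP[i _ ->]; exact: knil_phiI_selfadjoint.
have weight_e i : exists a, u *m phi 'e_i = a *: (u *m I).
  have [c uS] := u_eigen _ (map_f _ (mem_enum _ i)).
  exists (- c); rewrite scaleNr scalemxAl -uS -!mulmxA knil_II.
  by rewrite !mulmxN mulmx1 opprK.
have [a ua] := fin_all_exists weight_e.
exists ((Num.sqrt (gV u u))^-1 *: u); split.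
- by rewrite scalemx_sub.
- exact: (ep_normalize knil_gV u0).
move=> K; exists (\sum_i K 0 i * a i).
rewrite -!scalemxAl scalerA mulrC -scalerA; congr (_ *: _).
rewrite knil_phi_sum mulmx_sumr scaler_suml; apply: eq_bigr => i _.
by rewrite -scalemxAr ua scalerA.
Qed.

Definition weight_frame m (x : 'I_m -> 'rV_q) :=
  [/\ forall i j, gV (x i) (x j) = (i == j)%:R,
      forall i j, gV (x i) (x j *m I) = 0 &
      forall i K, exists a, x i *m phi K = a *: (x i *m I)].

Definition frame_comb m (x : 'I_m -> 'rV_q) (b c : 'I_m -> R) :=
  \sum_j b j *: x j + \sum_j c j *: (x j *m I).

Definition frame_spans m (x : 'I_m -> 'rV_q) :=
  forall v, v = frame_comb x (fun j => gV v (x j)) (fun j => gV v (x j *m I)).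

Definition frame_orth m (x : 'I_m -> 'rV_q) : 'M_q :=
  kermx (row_mx (gram x) (gram (fun j => x j *m I))).

Section Frame.
Variables (m : nat) (x : 'I_m -> 'rV[R]_q).
Hypothesis x_frame : weight_frame x.

Lemma frame_coord (b c : 'I_m -> R) l :
  gV (frame_comb x b c) (x l) = b l /\ gV (frame_comb x b c) (x l *m I) = c l.
Proof.
have [x_orthonormal x_orthI _] := x_frame.
rewrite /frame_comb !(epDl knil_gV) !(ep_suml knil_gV); split.
- rewrite [X in _ + X]big1 ?addr0 => [|j _]; last first.
    by rewrite (epZl knil_gV) knil_I_skew x_orthI oppr0 mulr0.
  by under eq_bigr do rewrite (epZl knil_gV) x_orthonormal; rewrite sum_mul_delta.
- rewrite big1 ?add0r => [|j _]; last by rewrite (epZl knil_gV) x_orthI mulr0.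
  by under eq_bigr do rewrite (epZl knil_gV) knil_gV_I x_orthonormal; rewrite sum_mul_delta.
Qed.

Lemma weight_frame_size : (m <= q)%N.
Proof.
have [x_orthonormal _ _] := x_frame.
pose X : 'M_(m, q) := \matrix_(i, k) x i 0 k.
have XG : X *m gram x = 1%:M.
  apply/row_matrixP => i; rewrite row_mul.
  have -> : row i X = x i by apply/rowP => k; rewrite !mxE.
  by rewrite mulmx_gram; apply/rowP => j; rewrite !mxE x_orthonormal eq_sym.
by rewrite -[m](@mxrank1 R) -XG (leq_trans (mxrankM_maxl _ _)) // rank_leq_col.
Qed.

Lemma sub_frame_orthP u :
  (u <= frame_orth x)%MS <-> forall j, gV u (x j) = 0 /\ gV u (x j *m I) = 0.
Proof.
rewrite /frame_orth; split => [/sub_kermxP | u_orth]; last first.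
  apply/sub_kermxP; rewrite mul_mx_row !mulmx_gram.
  by apply/eqP; rewrite row_mx_eq0; apply/andP; split; apply/eqP/rowP => j;
    rewrite !mxE; case: (u_orth j).
rewrite mul_mx_row !mulmx_gram => /eqP; rewrite row_mx_eq0.
case/andP => /eqP/rowP ux /eqP/rowP uxI j.
by have := ux j; have := uxI j; rewrite !mxE => -> ->.
Qed.

Lemma frame_orth_stable K : stablemx (frame_orth x) (phi K *m I).
Proof.
have [_ x_orthI x_weight] := x_frame.
apply: stablemxM; apply: stablemx_rowP => u /sub_frame_orthP u_orth;
  apply/sub_frame_orthP => j; have [ux uxI] := u_orth j.
- have [a xK] := x_weight j K; split; rewrite knil_phi_skew.
  + by rewrite xK (epZr knil_gV) uxI mulr0 oppr0.
  + by rewrite (weight_vector_I xK) (epZr knil_gV) ux mulr0 oppr0.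
- by split; rewrite ?knil_gV_I // knil_I_skew uxI oppr0.
Qed.

Lemma frame_orth_neq0 : ~ frame_spans x -> frame_orth x != 0.
Proof.
move=> /not_all_ex_not[v v_out].
pose w := v - frame_comb x (fun j => gV v (x j)) (fun j => gV v (x j *m I)).
have w0 : w != 0 by rewrite subr_eq0; apply/eqP.
have : (w <= frame_orth x)%MS.
  apply/sub_frame_orthP => j.
  have [cx cxI] := frame_coord (fun j => gV v (x j)) (fun j => gV v (x j *m I)) j.
  by rewrite !(epBl knil_gV) cx cxI !subrr.
by apply: contraTneq => ->; rewrite submx0.
Qed.

Lemma weight_frame_extend :
  ~ frame_spans x -> exists x' : 'I_m.+1 -> 'rV_q, weight_frame x'.
Proof.
move=> x_nspan; have [x_orthonormal x_orthI x_weight] := x_frame.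
have [u [/sub_frame_orthP u_x uu1 u_weight]] :=
  exists_weight_vector (frame_orth_neq0 x_nspan) frame_orth_stable.
have uuI : gV u (u *m I) = 0.
  rewrite (epC knil_gV); apply: (ep_skew_self knil_gV (f := fun v => v *m I)).
  exact: knil_I_skew.
have uIx j : gV (u *m I) (x j) = 0 by rewrite knil_I_skew (u_x j).2 oppr0.
pose x' j := if unlift ord_max j is Some j' then x j' else u.
have x'_lift j : x' (lift ord_max j) = x j by rewrite /x' liftK.
have x'_max : x' ord_max = u by rewrite /x' unlift_none.
exists x'; split=> [i j|i j|i K].
- case: (unliftP ord_max i) => [i'|] ->; case: (unliftP ord_max j) => [j'|] ->;
    rewrite ?x'_lift ?x'_max.
  + by rewrite x_orthonormal (inj_eq lift_inj).
  + by rewrite (epC knil_gV) (u_x i').1 eq_sym (negPf (neq_lift _ _)).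
  + by rewrite (u_x j').1 (negPf (neq_lift _ _)).
  + by rewrite eqxx uu1.
- case: (unliftP ord_max i) => [i'|] ->; case: (unliftP ord_max j) => [j'|] ->;
    rewrite ?x'_lift ?x'_max.
  + exact: x_orthI.
  + by rewrite (epC knil_gV) uIx.
  + exact: (u_x j').2.
  + exact: uuI.
- by case: (unliftP ord_max i) => [i'|] ->; rewrite ?x'_lift ?x'_max.
Qed.

End Frame.

Lemma exists_spanning_weight_frame :
  exists m (x : 'I_m -> 'rV_q), weight_frame x /\ frame_spans x.
Proof.
have frame_or_span k : (exists m (x : 'I_m -> 'rV_q), weight_frame x /\ frame_spans x) \/
                       exists m (x : 'I_m -> 'rV_q), weight_frame x /\ (k <= m)%N.
  elim: k => [|k [//|[m [x [x_frame km]]]]]; [right | by left |].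
    by exists 0%N, (fun=> 0); split=> //; split=> [[]|[]|[]].
  have [|x_nspan] := classic (frame_spans x); first by left; exists m, x.
  by have [x' x'_frame] := weight_frame_extend x_frame x_nspan; right; exists m.+1, x'.
have [//|[m [x [/weight_frame_size m_le_q q_lt_m]]]] := frame_or_span q.+1.
by move: m_le_q; rewrite leqNgt q_lt_m.
Qed.

Section FrameBrackets.
Variables (m : nat) (x : 'I_m -> 'rV[R]_q).
Hypothesis x_frame : weight_frame x.

Lemma beta_frame_x j j' : beta (x j) (x j') = 0.
Proof.
have [_ x_orthI x_weight] := x_frame.
apply: knil_beta_eq0 => K; rewrite knil_beta; have [a ->] := x_weight j K.
by rewrite (epZl knil_gV) (epC knil_gV) x_orthI mulr0.
Qed.

Lemma beta_frame_xI j j' : beta (x j *m I) (x j' *m I) = 0.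
Proof.
have [_ x_orthI x_weight] := x_frame.
apply: knil_beta_eq0 => K; rewrite knil_beta; have [a /weight_vector_I ->] := x_weight j K.
by rewrite (epZl knil_gV) x_orthI mulr0.
Qed.

Lemma beta_frame_x_xI j j' :
  beta (x j) (x j' *m I) = if j == j' then beta (x j) (x j *m I) else 0.
Proof.
have [x_orthonormal _ x_weight] := x_frame.
case: eqP => [->//|/eqP neq_jj']; apply: knil_beta_eq0 => K; rewrite knil_beta.
have [a ->] := x_weight j K.
by rewrite (epZl knil_gV) knil_gV_I x_orthonormal (negPf neq_jj') mulr0.
Qed.

(* A vanishing weight would make the I-stable plane spanned by x_j and x_j I a
   trivial submodule. *)
Lemma beta_frame_neq0 j : beta (x j) (x j *m I) != 0.
Proof.
have [x_orthonormal _ x_weight] := x_frame.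
have [_ _ _ no_trivial _] := hd.
apply/eqP => b0.
have xK0 K : x j *m phi K = 0.
  have [a xK] := x_weight j K; rewrite xK; have := knil_beta (x j) (x j *m I) K.
  rewrite b0 (ep0l knil_gk) xK (epZl knil_gV) knil_gV_I x_orthonormal eqxx mulr1.
  by move=> <-; rewrite scale0r.
have plane0 := no_trivial <<[:: x j; x j *m I]>>%VS.
have: x j \in <<[:: x j; x j *m I]>>%VS by rewrite memv_span ?mem_head.
rewrite plane0 ?memv0 => [/eqP xj0||].
- have := x_orthonormal j j; rewrite xj0 (ep0l knil_gV) eqxx.
  by move/eqP; rewrite eq_sym oner_eq0.
- move=> w /coord_span ->; rewrite !big_ord_recl big_ord0 addr0 /= !mulmxDl -!scalemxAl.
  rewrite -mulmxA knil_II mulmxN mulmx1 memvD ?memvZ ?memvN ?memv_span ?mem_head //.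
  by rewrite !inE eqxx orbT.
- move=> K w /coord_span ->; rewrite !big_ord_recl big_ord0 addr0 /= !mulmxDl -!scalemxAl.
  by rewrite xK0 -mulmxA -knil_phiI mulmxA xK0 mul0mx !scaler0 addr0.
Qed.

End FrameBrackets.

Section Realization.
Variables (L : vectType R) (br : L -> L -> L).
Variables (fk : {linear 'rV[R]_p -> L}) (fV : {linear 'rV[R]_q -> L}).
Hypothesis f_bij : bijective (fun kv : 'rV[R]_p * 'rV[R]_q => fk kv.1 + fV kv.2).
Hypothesis br_beta :
  forall K1 v1 K2 v2, br (fk K1 + fV v1) (fk K2 + fV v2) = fk (beta v1 v2).

Section FrameBasis.
Variables (m : nat) (x : 'I_m -> 'rV[R]_q).
Hypotheses (x_frame : weight_frame x) (x_span : frame_spans x).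

Let z i := fk 'e_i.
Let xL j := fV (x j).
Let yL j := fV (x j *m I).

Lemma frame_zxy_comb K b c :
  fk K + fV (frame_comb x b c) = zxy_comb z xL yL (fun i => K 0 i) b c.
Proof.
rewrite /zxy_comb {1}(row_sum_delta K) linearD !linear_sum addrA.
by congr (_ + _ + _); apply: eq_bigr => i _; rewrite linearZ.
Qed.

Lemma basis_frame_zxy : basis_of fullv (zxy z xL yL).
Proof.
have [f_inv fK f_invK] := f_bij.
apply/basis_zxyP; split=> [l | a b c abc0].
  have <- := f_invK l; case: (f_inv l) => K v /=.
  by rewrite {1}(x_span v) frame_zxy_comb; do 3 eexists.
pose K := \row_i a i.
have [K0 bc0] : (K, frame_comb x b c) = (0, 0).
  apply: (can_inj fK); rewrite /= !linear0 addr0 -abc0 frame_zxy_comb.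
  by apply: eq_zxy_comb => i //; rewrite mxE.
split=> [i|j|j]; first by have := congr1 (fun M : 'rV_p => M 0 i) K0; rewrite !mxE.
- by have [<- _] := frame_coord x_frame b c j; rewrite bc0 (ep0l knil_gV).
- by have [_ <-] := frame_coord x_frame b c j; rewrite bc0 (ep0l knil_gV).
Qed.

End FrameBasis.

Lemma knil_abelian_basis_of_data :
  exists r m (z : 'I_r -> L) (x y : 'I_m -> L) (lam : 'I_r -> 'I_m -> R),
    knil_abelian_basis br z x y lam.
Proof.
have [m [x [x_frame x_span]]] := exists_spanning_weight_frame.
pose lam i j := beta (x j) (x j *m I) 0 i.
exists p, m, (fun i => fk 'e_i), (fun j => fV (x j)), (fun j => fV (x j *m I)), lam.
have br_kk K K' : br (fk K) (fk K') = 0.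
  by have := br_beta K 0 K' 0; rewrite !linear0 !addr0 knil_beta0l linear0.
have br_kV K v : br (fk K) (fV v) = 0.
  by have := br_beta K 0 0 v; rewrite !linear0 addr0 add0r knil_beta0l linear0.
have br_Vk v K : br (fV v) (fk K) = 0.
  by have := br_beta 0 v K 0; rewrite !linear0 addr0 add0r knil_beta0r linear0.
have br_VV v w : br (fV v) (fV w) = fk (beta v w).
  by have := br_beta 0 v 0 w; rewrite !linear0 !add0r.
have beta_lam j : fk (beta (x j) (x j *m I)) = \sum_i lam i j *: fk 'e_i.
  rewrite {1}(row_sum_delta (beta _ _)) linear_sum.
  by apply: eq_bigr => i _; rewrite linearZ.
split.
- exact: basis_frame_zxy.
- split=> [i i'|i j|j j']; rewrite ?br_kk ?br_kV ?br_Vk //.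
  by rewrite !br_VV beta_frame_x ?beta_frame_xI ?linear0.
- by move=> j j'; rewrite br_VV beta_frame_x_xI //; case: eqP; rewrite ?linear0.
- move=> j j'; rewrite br_VV knil_betaC beta_frame_x_xI //.
  by case: eqP => _; rewrite ?oppr0 ?linear0 // linearN beta_lam.
- move=> j; apply: NNPP => /not_ex_all_not lam0.
  have /negP := beta_frame_neq0 x_frame j; apply; apply/eqP/rowP => i.
  by rewrite mxE; apply/eqP/negPn/negP/lam0.
Qed.

End Realization.

End Forward.

Definition dotr (R : realType) n (u v : 'rV[R]_n) : R := (u *m v^T) 0 0.

Lemma dotr_euclidean (R : realType) n : euclidean_product (@dotr R n).
Proof.
split=> [a u v w|u v|u u0]; rewrite /dotr.
- by rewrite mulmxDl -scalemxAl !mxE.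
- by rewrite !mxE; apply: eq_bigr => k _; rewrite !mxE mulrC.
rewrite mxE; have [k uk0] : exists k, u 0 k != 0.
  apply/existsP; apply: contraNT u0 => /existsPn uk0.
  by apply/eqP/rowP => k; rewrite mxE; apply/eqP/negPn.
rewrite (bigD1 k) //= mxE -expr2 ltr_pwDl ?exprn_even_gt0 //=.
by apply: sumr_ge0 => i _; rewrite mxE -expr2 sqr_ge0.
Qed.

Section StandardModel.
Variables (R : realType) (r m : nat) (lam : 'I_r -> 'I_m -> R).
Hypothesis lam_neq0 : forall j, exists i, lam i j != 0.

(* V = R^m x R^m with I (a, b) = (- b, a); the j-th complex line is spanned by
   the j-th coordinate vectors of the two factors. *)
Definition model_I : 'M[R]_(m + m) := block_mx 0 1%:M (- 1%:M) 0.
Definition model_weight (K : 'rV[R]_r) : 'M[R]_m := diag_mx (K *m \matrix_(i, j) lam i j).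
Definition model_phi K : 'M[R]_(m + m) := block_mx 0 (model_weight K) (- model_weight K) 0.
Definition model_beta (v1 v2 : 'rV[R]_(m + m)) : 'rV[R]_r :=
  \row_i dotr (v1 *m model_phi 'e_i) v2.

Lemma model_phiP a K L : model_phi (a *: K + L) = a *: model_phi K + model_phi L.
Proof.
rewrite /model_phi /model_weight scale_block_mx add_block_mx !scaler0 !addr0.
by rewrite mulmxDl -scalemxAl linearP scalerN opprD.
Qed.

Lemma model_weight_e i : model_weight 'e_i = diag_mx (\row_j lam i j).
Proof. by rewrite /model_weight -rowE; congr diag_mx; apply/rowP => j; rewrite !mxE. Qed.

Lemma model_II : model_I *m model_I = - 1%:M.
Proof.
rewrite /model_I mulmx_block !(mul0mx, mulmx0, mul1mx, mulmx1, addr0, add0r).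
by rewrite (scalar_mx_block m m) opp_block_mx oppr0.
Qed.

Lemma model_dotr_I v w : dotr (v *m model_I) (w *m model_I) = dotr v w.
Proof.
have I_orth : model_I *m model_I^T = 1%:M.
  rewrite /model_I tr_block_mx !trmx0 linearN /= trmx1 mulmx_block.
  rewrite !(mul0mx, mulmx0, mul1mx, mulmx1, mulNmx, addr0, add0r) opprK.
  by rewrite (scalar_mx_block m m).
by rewrite /dotr trmx_mul mulmxA -(mulmxA v) I_orth mulmx1.
Qed.

Lemma model_phiI K : model_phi K *m model_I = model_I *m model_phi K.
Proof.
rewrite /model_phi /model_I !mulmx_block.
by rewrite !(mul0mx, mulmx0, mulmx1, mul1mx, mulNmx, mulmxN, addr0, add0r, oppr0).
Qed.

Lemma model_phiC K L : model_phi K *m model_phi L = model_phi L *m model_phi K.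
Proof.
rewrite /model_phi !mulmx_block !(mul0mx, mulmx0, mulNmx, mulmxN, addr0, add0r).
by rewrite /model_weight diag_mxC [diag_mx _ *m diag_mx _]diag_mxC.
Qed.

Lemma model_phi_skew K v w : dotr (v *m model_phi K) w + dotr v (w *m model_phi K) = 0.
Proof.
have phi_tr : (model_phi K)^T = - model_phi K.
  rewrite /model_phi tr_block_mx !trmx0 linearN /= /model_weight tr_diag_mx.
  by rewrite opp_block_mx oppr0 opprK.
by rewrite /dotr trmx_mul phi_tr mulNmx mulmxN mulmxA [(- (_ : 'M_1)) 0 0]mxE addrN.
Qed.

Lemma model_betaP v1 v2 K : dotr (model_beta v1 v2) K = dotr (v1 *m model_phi K) v2.
Proof.
rewrite (linear_row_sum model_phiP K) mulmx_sumr (ep_suml (dotr_euclidean _ _)).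
rewrite {1}/dotr mxE; apply: eq_bigr => i _.
by rewrite -scalemxAr (epZl (dotr_euclidean _ _)) !mxE mulrC.
Qed.

Lemma model_phi_e i (v : 'rV[R]_(m + m)) : v *m model_phi 'e_i =
  row_mx (- (rsubmx v *m diag_mx (\row_j lam i j))) (lsubmx v *m diag_mx (\row_j lam i j)).
Proof.
rewrite -[v in LHS](hsubmxK v) /model_phi mul_row_block model_weight_e.
by rewrite !(mulmx0, add0r, addr0) mulmxN.
Qed.

Lemma model_no_trivial (W : {vspace 'rV[R]_(m + m)}) :
  (forall K w, w \in W -> w *m model_phi K = 0) -> W = 0%VS.
Proof.
move=> W_trivial; apply/vspaceP => w; rewrite memv0.
apply/idP/eqP => [wW|->]; last exact: mem0v.
have lr0 j : lsubmx w 0 j = 0 /\ rsubmx w 0 j = 0.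
  have [i lam_ij] := lam_neq0 j.
  move: (W_trivial 'e_i w wW); rewrite model_phi_e => /eqP; rewrite row_mx_eq0 oppr_eq0.
  case/andP => /eqP/rowP/(_ j) + /eqP/rowP/(_ j); rewrite !mul_mx_diag !mxE.
  by move=> /eqP + /eqP; rewrite !mulf_eq0 (negPf lam_ij) !orbF => /eqP -> /eqP ->.
rewrite -(hsubmxK w); have -> : lsubmx w = 0 by apply/rowP => j; rewrite (lr0 j).1 mxE.
have -> : rsubmx w = 0 by apply/rowP => j; rewrite (lr0 j).2 mxE.
exact: row_mx0.
Qed.

Lemma model_knil_data :
  knil_data (fun _ _ : 'rV[R]_r => 0) (@dotr R r) model_I (@dotr R (m + m))
            model_phi model_beta.
Proof.
split.
- split; first by split=> *; rewrite ?scaler0 ?addr0.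
    exact: dotr_euclidean.
  by move=> *; rewrite /dotr !mul0mx linear0 mulmx0 !mxE addr0.
- by split; [exact: model_II | exact: dotr_euclidean | exact: model_dotr_I].
- split; [exact: model_phiP | | exact: model_phiI | exact: model_phi_skew].
  by move=> K L v; rewrite (linear_row_sum model_phiP 0) big1 ?mulmx0 => [|i _];
    rewrite ?mxE ?scale0r // -!mulmxA model_phiC subrr.
- by move=> W _; exact: model_no_trivial.
- exact: model_betaP.
Qed.

Lemma model_betaE v1 v2 i : model_beta v1 v2 0 i = \sum_j lam i j *
  (v1 0 (lshift m j) * v2 0 (rshift m j) - v1 0 (rshift m j) * v2 0 (lshift m j)).
Proof.
rewrite mxE /dotr mxE big_split_ord /= model_phi_e -big_split; apply: eq_bigr => j _ /=.
rewrite !mxE (unsplitK (inl _ j)) (unsplitK (inr _ j)) !mul_mx_diag !mxE; ring.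
Qed.

End StandardModel.

Section Backward.
Variables (R : realType) (L : vectType R) (r m : nat).
Variables (z : 'I_r -> L) (x y : 'I_m -> L).

Definition model_fk (K : 'rV[R]_r) : L := \sum_i K 0 i *: z i.

Definition model_fV (v : 'rV[R]_(m + m)) : L :=
  \sum_j v 0 (lshift m j) *: x j + \sum_j v 0 (rshift m j) *: y j.

Lemma model_fk_linear : linear model_fk.
Proof.
move=> a K K'; rewrite /model_fk scaler_sumr -big_split; apply: eq_bigr => i _ /=.
by rewrite !mxE scalerDl scalerA.
Qed.

Lemma model_fV_linear : linear model_fV.
Proof.
move=> a v w; rewrite /model_fV.
have sumP (f : 'I_m -> 'I_(m + m)) (t : 'I_m -> L) :
    \sum_j (a *: v + w) 0 (f j) *: t j =
    a *: \sum_j v 0 (f j) *: t j + \sum_j w 0 (f j) *: t j.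
  by rewrite scaler_sumr -big_split; apply: eq_bigr => j _; rewrite !mxE scalerDl scalerA.
by rewrite !sumP scalerDr addrACA.
Qed.

Lemma model_fk_fV K v : model_fk K + model_fV v =
  zxy_comb z x y (fun i => K 0 i) (fun j => v 0 (lshift m j)) (fun j => v 0 (rshift m j)).
Proof. by rewrite /model_fk /model_fV /zxy_comb addrA. Qed.

Lemma model_f_bijective : basis_of fullv (zxy z x y) ->
  bijective (fun kv : 'rV[R]_r * 'rV[R]_(m + m) => model_fk kv.1 + model_fV kv.2).
Proof.
case/basis_zxyP => zxy_span zxy_free.
pose f kv := model_fk kv.1 + model_fV kv.2.
have f_inj : injective f.
  move=> [K1 v1] [K2 v2]; rewrite /f /= !model_fk_fV => /eqP.
  rewrite -subr_eq0 zxy_combB => /eqP/zxy_free[a0 b0 c0].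
  congr pair; apply/rowP => k; first exact/subr0_eq/a0.
  case: (splitP k) => [j kj|j kj].
    have -> : k = lshift m j by apply: val_inj.
    exact/subr0_eq/b0.
  have -> : k = rshift m j by apply: val_inj.
  exact/subr0_eq/c0.
pose c l k := coord (zxy_tuple z x y) k l.
pose f_inv l := (\row_i c l (lshift _ i),
  row_mx (\row_j c l (rshift r (lshift m j))) (\row_j c l (rshift r (rshift m j)))).
have f_invK : cancel f_inv f.
  move=> l; have l_span : l \in <<zxy z x y>>%VS by apply/span_zxyP; apply: zxy_span.
  rewrite /f model_fk_fV [RHS](zxy_comb_coord l_span).
  by apply: eq_zxy_comb => k; rewrite ?row_mxEl ?row_mxEr mxE.
by exists f_inv => // kv; apply: f_inj; rewrite f_invK.
Qed.

Variables (br : L -> L -> L) (lam : 'I_r -> 'I_m -> R).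
Hypothesis br_zxy_comb : forall a b c a' b' c',
  br (zxy_comb z x y a b c) (zxy_comb z x y a' b' c') =
  \sum_j (b j * c' j - c j * b' j) *: \sum_(i < r) lam i j *: z i.

Lemma model_fk_fV_br K1 v1 K2 v2 :
  br (model_fk K1 + model_fV v1) (model_fk K2 + model_fV v2) =
  model_fk (model_beta lam v1 v2).
Proof.
rewrite !model_fk_fV br_zxy_comb /model_fk.
under [RHS]eq_bigr do rewrite model_betaE scaler_suml.
rewrite exchange_big /=; apply: eq_bigr => j _; rewrite scaler_sumr.
by apply: eq_bigr => i _; rewrite scalerA mulrC.
Qed.

End Backward.

Lemma knil_abelian_of_basis (R : realType) (L : vectType R) (br : L -> L -> L)
    r m (z : 'I_r -> L) (x y : 'I_m -> L) (lam : 'I_r -> 'I_m -> R) :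
  lie_bracket br -> knil_abelian_basis br z x y lam -> knilpotent_abelian br.
Proof.
move=> hbr [zxy_basis [hzz hzx hxx] hxy hyx lam_neq0].
pose fk : {linear 'rV[R]_r -> L} :=
  HB.pack (model_fk z) (GRing.isLinear.Build _ _ _ _ (model_fk z) (model_fk_linear z)).
pose fV : {linear 'rV[R]_(m + m) -> L} :=
  HB.pack (model_fV x y)
    (GRing.isLinear.Build _ _ _ _ (model_fV x y) (model_fV_linear x y)).
exists r, (m + m), (fun _ _ => 0), (@dotr R r), (model_I R m), (@dotr R (m + m)),
  (model_phi lam), (model_beta lam), fk, fV; split=> //.
- exact: model_knil_data.
- exact: model_f_bijective.
- exact: model_fk_fV_br (lie_br_zxy_comb hbr hzz hzx hxx hxy hyx).
Qed.

Unset Implicit Arguments.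

Theorem proposition7p5 (R : realType) (L : vectType R) (br : L -> L -> L)
    (hbr : lie_bracket br) :
  knilpotent_abelian br <->
  exists (r m : nat) (z : 'I_r -> L) (x y : 'I_m -> L) (lam : 'I_r -> 'I_m -> R),
    [/\ basis_of fullv ([seq z i | i <- enum 'I_r] ++ [seq x j | j <- enum 'I_m]
                         ++ [seq y j | j <- enum 'I_m]),
        [/\ (forall i i', br (z i) (z i') = 0),
        (forall i j, [/\ br (z i) (x j) = 0, br (x j) (z i) = 0,
                         br (z i) (y j) = 0 & br (y j) (z i) = 0]) &
        (forall j j', br (x j) (x j') = 0 /\ br (y j) (y j') = 0)],
        (forall j j', br (x j) (y j')
                      = if j == j' then \sum_(i < r) lam i j *: z i else 0),
        (forall j j', br (y j') (x j)
                      = if j == j' then - \sum_(i < r) lam i j *: z i else 0) &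
        (forall j, exists i, lam i j != 0)].
Proof.
split=> [[p [q [brk [gk [I [gV [phi [beta [fk [fV [hd k_abelian f_bij br_beta]]]]]]]]]]] |].
  exact (knil_abelian_basis_of_data hd k_abelian f_bij br_beta).
by case=> r [m [z [x [y [lam basis]]]]]; apply: knil_abelian_of_basis hbr basis.
Qed.
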